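(* Let $H\le\widetilde{\mathcal{P}}_t$ be an abelian subgroup of $t$-qubit Pauli strings, let $C(H)\le\widetilde{\mathcal{P}}_t$ be its centralizer, and let $\widetilde{\mathcal{Q}}_t=\{\mathtt{I},\mathtt{X},\mathtt{Y}\}^{\times t}\subseteq\widetilde{\mathcal{P}}_t$ be the set of $\mathtt{Z}$-free strings. Then $$\lvert\widetilde{\mathcal{Q}}_t\cap C(H)\rvert=\frac{1}{\lvert H\rvert}\sum_{h\in H}3^{n_I(h)}(-1)^{n_Z(h)},$$ where $n_I(h)$ and $n_Z(h)$ denote the number of tensor positions at which $h$ equals $\mathtt{I}$ and $\mathtt{Z}$, respectively.
   Context: $\widetilde{\mathcal{P}}_t$ is the group of $t$-qubit Pauli operators modulo phases $\{\pm1,\pm i\}$, whose elements are strings in $\{\mathtt{I},\mathtt{X},\mathtt{Y},\mathtt{Z}\}^t$. A subgroup is abelian if its elements pairwise commute as operators (on representatives), and $C(H)$ is the set of strings in $\widetilde{\mathcal{P}}_t$ commuting with every element of $H$. *)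

From HB Require Import structures.
From mathcomp Require Import all_boot all_order all_algebra.
Set Implicit Arguments. Unset Strict Implicit. Unset Printing Implicit Defensive.

Inductive pauli := PI | PX | PY | PZ.

Definition pauli_to_ord (p : pauli) : 'I_4 :=
  match p with PI => inord 0 | PX => inord 1 | PY => inord 2 | PZ => inord 3 end.
Definition ord_to_pauli (i : 'I_4) : pauli :=
  match val i with 0 => PI | 1 => PX | 2 => PY | _ => PZ end.
Lemma pauli_ordK : cancel pauli_to_ord ord_to_pauli.
Proof. by case; rewrite /ord_to_pauli /= inordK. Qed.
HB.instance Definition _ := Equality.copy pauli (can_type pauli_ordK).
HB.instance Definition _ := Choice.copy pauli (can_type pauli_ordK).
HB.instance Definition _ := Countable.copy pauli (can_type pauli_ordK).
HB.instance Definition _ := Finite.copy pauli (can_type pauli_ordK).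

(* Product of letters modulo phases {±1, ±i}. *)
Definition pmul (a b : pauli) : pauli :=
  match a, b with
  | PI, c | c, PI => c
  | PX, PX | PY, PY | PZ, PZ => PI
  | PX, PY | PY, PX => PZ
  | PY, PZ | PZ, PY => PX
  | PZ, PX | PX, PZ => PY
  end.

Definition anticomm1 (a b : pauli) : bool := [&& a != PI, b != PI & a != b].

Definition pstring (t : nat) := {ffun 'I_t -> pauli}.

Definition pid (t : nat) : pstring t := [ffun => PI].
Definition psmul (t : nat) (g h : pstring t) : pstring t :=
  [ffun i => pmul (g i) (h i)].

(* Representatives commute as operators iff the number of anticommuting
   tensor positions is even. *)
Definition pcommute (t : nat) (g h : pstring t) : bool :=
  ~~ odd #|[set i | anticomm1 (g i) (h i)]|.

Definition is_psubgroup (t : nat) (H : {set pstring t}) : Prop :=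
  pid t \in H /\ {in H &, forall g h, psmul g h \in H}.

Definition is_abelian (t : nat) (H : {set pstring t}) : Prop :=
  {in H &, forall g h, pcommute g h}.

Definition centralizer (t : nat) (H : {set pstring t}) : {set pstring t} :=
  [set g : pstring t | [forall h in H, pcommute g h]].

Definition Zfree (t : nat) : {set pstring t} :=
  [set g : pstring t | [forall i, g i != PZ]].

Definition nI (t : nat) (h : pstring t) : nat := #|[set i | h i == PI]|.
Definition nZ (t : nat) (h : pstring t) : nat := #|[set i | h i == PZ]|.

(* Each g gives a sign character h |-> (-1)^[g and h anticommute] of H, since
   anticommutation of g with a letter product is additive modulo 2 positionwise.
   Orthogonality makes the character sum over H equal |H| on C(H) and 0
   elsewhere, so |H| |Q_t ∩ C(H)| is the double sum over g in Q_t and h in H.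
   Summing over g first factorises over the tensor positions: a Z-free letter
   anticommutes with I never, with X or Y once, and with Z twice, giving the
   local factors 3, 1, 1 and -1. *)

From mathcomp Require Import all_boot all_order all_algebra.
From mathcomp Require Import ring.
Set Implicit Arguments. Unset Strict Implicit.
Import GRing.Theory Num.Theory.
Local Open Scope ring_scope.

Lemma pauli_eqE (a b : pauli) : (a == b) =
  match a, b with PI, PI | PX, PX | PY, PY | PZ, PZ => true | _, _ => false end.
Proof. by case: a; case: b; rewrite ?eqxx //; apply/eqP; discriminate. Qed.

Lemma sum_pauli (V : nmodType) (F : pauli -> V) :
  \sum_a F a = F PI + F PX + F PY + F PZ.
Proof.
have enum_pauli : perm_eq (index_enum pauli) [:: PI; PX; PY; PZ].
  apply: uniq_perm; first exact: index_enum_uniq.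
    by rewrite /= !inE !pauli_eqE.
  by move=> a; rewrite mem_index_enum !inE !pauli_eqE; case: a.
by rewrite (perm_big _ enum_pauli) unlock /= addr0 !addrA.
Qed.

Lemma prod_if_card (R : pzSemiRingType) (I : finType) (P : pred I) (x : R) :
  \prod_i (if P i then x else 1) = x ^+ #|[set i | P i]|.
Proof. by rewrite -prodr_const [RHS]big_mkcond; apply: eq_bigr => i _; rewrite inE. Qed.

Section SignCharacter.

Variable R : comPzRingType.

Definition sign1 (a b : pauli) : R := if anticomm1 a b then -1 else 1.

Definition psign (t : nat) (g h : pstring t) : R := \prod_i sign1 (g i) (h i).

Lemma sign1_pmulr a b c : sign1 a (pmul b c) = sign1 a b * sign1 a c.
Proof.
by case: a; case: b; case: c;
  rewrite /sign1 /anticomm1 !pauli_eqE /= ?mulr1 ?mul1r ?mulrNN ?mulr1.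
Qed.

Lemma psign_psmulr t (g h1 h2 : pstring t) :
  psign g (psmul h1 h2) = psign g h1 * psign g h2.
Proof.
by rewrite /psign -big_split; apply: eq_bigr => i _; rewrite ffunE sign1_pmulr.
Qed.

Lemma psign_pcommute t (g h : pstring t) :
  psign g h = if pcommute g h then 1 else -1.
Proof.
rewrite /pcommute; set n := #|_|.
have -> : (if ~~ odd n then 1 else -1) = (-1 : R) ^+ n by rewrite -signr_odd; case: odd.
by rewrite -prod_if_card; apply: eq_bigr => i _; rewrite /sign1; case: anticomm1.
Qed.

Lemma sum_sign1_Zfree b :
  \sum_(a | a != PZ) sign1 a b = (if b == PI then 3 else 1) * (if b == PZ then -1 else 1).
Proof.
rewrite big_mkcond sum_pauli /sign1 /anticomm1 !pauli_eqE.
by case: b => /=; ring.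
Qed.

Lemma sum_psign_Zfree t (h : pstring t) :
  \sum_(g in Zfree t) psign g h = 3%:R ^+ nI h * (-1) ^+ nZ h.
Proof.
transitivity (\prod_i \sum_(a | a != PZ) sign1 a (h i)).
  rewrite bigA_distr_big; apply: eq_bigl => g.
  by rewrite inE; apply/forallP/ffun_onP.
rewrite /nI /nZ -!prod_if_card -big_split.
by apply: eq_bigr => i _; apply: sum_sign1_Zfree.
Qed.

End SignCharacter.

Lemma psmulK t (h1 h2 : pstring t) : psmul h1 (psmul h1 h2) = h2.
Proof. by apply/ffunP => i; rewrite !ffunE; case: (h1 i); case: (h2 i). Qed.

Lemma sum_psign_psubgroup (R : numDomainType) t (H : {set pstring t}) (g : pstring t) :
  is_psubgroup H ->
  \sum_(h in H) psign R g h = if g \in centralizer H then #|H|%:R else 0.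
Proof.
move=> [_ mulH]; rewrite inE; case: forall_inP => [gC | /forall_inP].
  by rewrite -sumr_const; apply: eq_bigr => h hH; rewrite psign_pcommute gC.
case/forall_inPn=> h1 h1H /negbTE g_h1.
set S := \sum_(h in H) _.
have SN : S = - S.
  rewrite {1}/S (reindex_inj (can_inj (psmulK h1))) /= -sumrN.
  apply: eq_big => h; last by rewrite psign_psmulr psign_pcommute g_h1 mulN1r.
  apply/idP/idP => hH; last exact: mulH.
  by rewrite -(psmulK h1 h); apply: mulH.
have S2 : S *+ 2 = 0 by rewrite mulr2n {2}SN subrr.
by move/eqP: S2; rewrite mulrn_eq0 => /eqP.
Qed.

Theorem theorem8 (t : nat) (H : {set pstring t}) :
  is_psubgroup H -> is_abelian H ->
  (#|Zfree t :&: centralizer H|)%:R =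
    (#|H|%:R)^-1 * \sum_(h in H) (3%:R ^+ nI h * (-1) ^+ nZ h) :> rat.
Proof.
move=> subH _.
have H_neq0 : #|H|%:R != 0 :> rat.
  by rewrite pnatr_eq0 -lt0n card_gt0; apply/set0Pn; exists (pid t); case: subH.
rewrite (eq_bigr _ (fun h _ => esym (sum_psign_Zfree rat h))) exchange_big /=.
rewrite (eq_bigr _ (fun g _ => sum_psign_psubgroup rat g subH)) -big_mkcondr /=.
rewrite (eq_bigl (fun g => g \in Zfree t :&: centralizer H)) => [|g].
  by rewrite sumr_const mulrnAr mulVf.
by rewrite in_setI.
Qed.
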